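(* Let $\Gamma=(N,A,u)$ be a finite game and $\mu\in\Delta A$. Then $\mu$ is directly implementable if and only if $\mu\in\mathcal{I}$, where $\mathcal{I}=\bigcup_{q\in\mathrm{CE}(\Gamma)}\mathcal{I}_q$ and $\mathcal{I}_q=\{\mu'\in\Delta A:\mathrm{supp}(\mu')\subseteq\mathrm{supp}(q),\ \mathbb{E}_{\mu'}[\log q]=\mathbb{E}_q[\log q]\}$.
   Context: A finite game $\Gamma=(N,A,u)$ has a finite set of players $N$, finite action sets $A_i$, $A=\times_iA_i$, utilities $u_i:A\to\mathbb{R}$ (extended multilinearly to mixed profiles). $\mathrm{CE}(\Gamma)$ is the set of correlated equilibria: $p\in\Delta A$ such that for all $i$, all $a_i$ with $\sum_{a_{-i}}p_{a_i,a_{-i}}>0$, all $b\in A_i$, $\sum_{a_{-i}}p_{a_i,a_{-i}}[u_i(a_i,a_{-i})-u_i(b,a_{-i})]\ge0$. Convention $0\log0=0$. A partially specified data-generating process is $\mathcal{D}=(M,\eta,\mathcal{F})$ with $M=\times_iM_i$ finite, $\eta\in\Delta M$, $\mathcal{F}\subseteq\{f:M\to\mathbb{R}\}$; with $\Delta_{\mathcal{D}}=\{q\in\Delta M:\sum_mq_mf(m)=\sum_m\eta_mf(m)\ \forall f\in\mathcal{F}\}$, the belief is the unique maximizer $q$ of $-\sum_mq_m\log q_m$ over $\Delta_{\mathcal{D}}$. A strategy profile is $\sigma=(\sigma_i)$, $\sigma_i:M_i\to\Delta A_i$, $\sigma(a\mid m)=\prod_i\sigma_i(a_i\mid m_i)$,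 $(\eta\circ\sigma)(a)=\sum_m\eta_m\sigma(a\mid m)$. $\mu$ is implemented by $\mathcal{D}$ via $\sigma$ if (i) $q$ is the maximum-entropy belief; (ii) for all $i$, all $m_i$ with positive $q$-marginal, all $a_i'$: $\sum_{m_{-i}}q_{m_i,m_{-i}}[u_i(\sigma_i(m_i),\sigma_{-i}(m_{-i}))-u_i(a_i',\sigma_{-i}(m_{-i}))]\ge0$; (iii) $\mu=\eta\circ\sigma$. An outcome $\mu$ is directly implementable if it is implemented in this sense by some $\mathcal{D}=(M,\eta,\mathcal{F})$ with $M=A$ (i.e. $M_i=A_i$) and obedient strategies $\sigma_i(a_i)=$ the point mass on $a_i$ for every $i$. *)

From mathcomp Require Import all_boot all_order all_algebra.
From mathcomp Require Import reals exp.
Set Implicit Arguments. Unset Strict Implicit. Unset Printing Implicit Defensive.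
Import Order.TTheory GRing.Theory Num.Theory.
Local Open Scope ring_scope.

Section Game.
Variable R : realType.

Definition is_dist (T : finType) (p : T -> R) : Prop :=
  (forall t, 0 <= p t) /\ \sum_(t : T) p t = 1.

Definition xlogy (x y : R) : R := if x == 0 then 0 else x * ln y.

Definition entropy (T : finType) (q : T -> R) : R := - \sum_(t : T) xlogy (q t) (q t).

Definition prof (I : finType) (A : I -> finType) := {dffun forall i, A i}.

Definition upd (I : finType) (A : I -> finType) (a : prof A) (i : I) (b : A i)
  : prof A := finfun (@dfwith I A (fun j => a j) i b).
Arguments upd {I A} a i b.

Definition CE (I : finType) (A : I -> finType) (u : I -> prof A -> R)
  (p : prof A -> R) : Prop :=
  is_dist p /\
  forall (i : I) (ai : A i),
    0 < \sum_(a : prof A | a i == ai) p a ->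
    forall b : A i,
      0 <= \sum_(a : prof A | a i == ai) p a * (u i a - u i (upd a i b)).

Definition is_strategy (I : finType) (A M : I -> finType)
  (sigma : forall i, M i -> A i -> R) : Prop :=
  forall i (mi : M i), is_dist (sigma i mi).

Definition sprob (I : finType) (A M : I -> finType)
  (sigma : forall i, M i -> A i -> R) (a : prof A) (m : prof M) : R :=
  \prod_(j : I) sigma j (m j) (a j).

Definition EU (I : finType) (A M : I -> finType) (u : I -> prof A -> R)
  (sigma : forall i, M i -> A i -> R) (i : I) (m : prof M) : R :=
  \sum_(a : prof A) sprob sigma a m * u i a.

(** u_i(a_i', sigma_{-i}(m_{-i})), multilinear extension *)
Definition EUdev (I : finType) (A M : I -> finType) (u : I -> prof A -> R)
  (sigma : forall i, M i -> A i -> R) (i : I) (ai' : A i) (m : prof M) : R :=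
  \sum_(a : prof A | a i == ai')
     (\prod_(j : I | j != i) sigma j (m j) (a j)) * u i a.

Definition DeltaD (I : finType) (M : I -> finType) (eta : prof M -> R)
  (F : (prof M -> R) -> Prop) (q : prof M -> R) : Prop :=
  is_dist q /\
  forall f, F f -> \sum_(m : prof M) q m * f m = \sum_(m : prof M) eta m * f m.

Definition maxent_belief (I : finType) (M : I -> finType) (eta : prof M -> R)
  (F : (prof M -> R) -> Prop) (q : prof M -> R) : Prop :=
  DeltaD eta F q /\
  (forall q', DeltaD eta F q' -> entropy q' <= entropy q) /\
  (forall q', DeltaD eta F q' ->
     (forall q'', DeltaD eta F q'' -> entropy q'' <= entropy q') -> q' = q).

Definition implements (I : finType) (A M : I -> finType) (u : I -> prof A -> R)
  (eta : prof M -> R) (F : (prof M -> R) -> Prop)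
  (sigma : forall i, M i -> A i -> R) (q : prof M -> R) (mu : prof A -> R)
  : Prop :=
  maxent_belief eta F q /\
  (forall (i : I) (mi : M i),
     0 < \sum_(m : prof M | m i == mi) q m ->
     forall ai' : A i,
       0 <= \sum_(m : prof M | m i == mi)
              q m * (EU u sigma i m - EUdev u sigma ai' m)) /\
  (forall a : prof A, mu a = \sum_(m : prof M) eta m * sprob sigma a m).

Definition obedient (I : finType) (A : I -> finType) : forall i, A i -> A i -> R :=
  fun i mi ai => if ai == mi then 1 else 0.

Definition directly_implementable (I : finType) (A : I -> finType)
  (u : I -> prof A -> R) (mu : prof A -> R) : Prop :=
  exists (eta : prof A -> R) (F : (prof A -> R) -> Prop) (q : prof A -> R),
    is_dist eta /\ implements u eta F (@obedient I A) q mu.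

Definition Iq (I : finType) (A : I -> finType) (q mu' : prof A -> R) : Prop :=
  is_dist mu' /\
  (forall a, mu' a != 0 -> q a != 0) /\
  \sum_(a : prof A) xlogy (mu' a) (q a) = \sum_(a : prof A) xlogy (q a) (q a).

End Game.

(* A maximum-entropy belief q maximizes entropy in particular along the line
   through q and eta = mu, which stays in Delta_D as long as it stays in the
   simplex, because the constraints are linear.  Moving from q towards mu
   increases entropy at an infinite rate if mu charges a point outside supp q;
   otherwise the rate is - sum_a (mu a - q a) ln (q a), and it must vanish since
   the line extends on both sides of q.  Obedience of q is exactly the CE
   condition.  Conversely, with eta = mu and constraints fixing E[ln q] and the
   mass outside supp q, Gibbs' inequality makes q the unique maximum-entropy
   belief. *)

From mathcomp Require Import all_boot all_order all_algebra.
From mathcomp Require Import boolp reals sequences exp.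
From mathcomp Require Import ring lra.
Import Order.TTheory GRing.Theory Num.Theory.
Set Implicit Arguments. Unset Strict Implicit. Unset Printing Implicit Defensive.
Local Open Scope ring_scope.

Section Logarithm.
Variable R : realType.
Implicit Types x y z t : R.

Lemma ln_le_subr1 z : 0 < z -> ln z <= z - 1.
Proof. by move=> z0; have := @le_ln1Dx R (z - 1); rewrite subrKC; apply; lra. Qed.

Lemma ln_lt_subr1 z : 0 < z -> z != 1 -> ln z < z - 1.
Proof.
move=> z0 z1; have lnz0 : ln z != 0 by rewrite ln_eq0.
by have := expR_gt1Dx lnz0; rewrite lnK ?posrE //; lra.
Qed.

Lemma ler_sub_mul_lnB x y : 0 < x -> 0 <= y -> y - x <= y * (ln y - ln x).
Proof.
move=> x0; rewrite le_eqVlt => /predU1P[<-|y0]; first by rewrite mul0r; lra.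
have lnxy : ln x - ln y <= x / y - 1.
  by rewrite -ln_div ?posrE ?ln_le_subr1 ?divr_gt0.
have := ler_wpM2l (ltW y0) lnxy.
by rewrite !mulrBr mulrCA divff ?gt_eqF // mulr1; lra.
Qed.

Lemma ltr_sub_mul_lnB x y : 0 < x -> 0 < y -> x != y -> y - x < y * (ln y - ln x).
Proof.
move=> x0 y0 xy.
have xy1 : x / y != 1 by apply: contra xy => /eqP/divr1_eq ->.
have lnxy : ln x - ln y < x / y - 1.
  by rewrite -ln_div ?posrE ?ln_lt_subr1 ?divr_gt0.
have := lnxy; rewrite -(ltr_pM2l y0).
by rewrite !mulrBr mulrCA divff ?gt_eqF // mulr1; lra.
Qed.

Lemma xlnx_le_quadratic x y : 0 < x -> 0 <= y ->
  y * ln y <= x * ln x + (y - x) * (1 + ln x) + (y - x) ^+ 2 / x.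
Proof.
move=> x0; rewrite le_eqVlt => /predU1P[<-|y0].
  by rewrite sub0r sqrrN expr2 mulfK ?gt_eqF //; lra.
have lnyx : ln y - ln x <= y / x - 1.
  by rewrite -ln_div ?posrE ?ln_le_subr1 ?divr_gt0.
have := ler_wpM2l (ltW y0) lnyx.
have -> : y * (y / x - 1) = (y - x) ^+ 2 / x + (y - x) by field; rewrite gt_eqF.
by rewrite mulrBr; lra.
Qed.

Lemma convex_xlnx t x y : 0 <= t <= 1 -> 0 <= x -> 0 <= y ->
  ((1 - t) * x + t * y) * ln ((1 - t) * x + t * y)
    <= (1 - t) * (x * ln x) + t * (y * ln y).
Proof.
move=> /andP[t0 t1] x0 y0; rewrite !mulrA.
set z := (1 - t) * x + t * y.
have tx0 : 0 <= (1 - t) * x by rewrite mulr_ge0 // subr_ge0.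
have ty0 : 0 <= t * y by rewrite mulr_ge0.
have [z0|zpos] := eqVneq z 0.
  rewrite z0 mul0r; move/eqP: z0; rewrite paddr_eq0 // => /andP[/eqP-> /eqP->].
  by rewrite !mul0r addr0.
have {}zpos : 0 < z by rewrite lt_def zpos addr_ge0.
have t1' : 0 <= 1 - t by rewrite subr_ge0.
have hx := ler_wpM2l t1' (ler_sub_mul_lnB zpos x0).
have hy := ler_wpM2l t0 (ler_sub_mul_lnB zpos y0).
have -> : z * ln z = (1 - t) * x * ln z + t * y * ln z by rewrite -mulrDl.
rewrite !mulrBr !mulrA in hx hy.
have : (1 - t) * (x - z) + t * (y - z) = 0 by rewrite /z; ring.
lra.
Qed.

Lemma norm_le_small_eq0 (e C L : R) : 0 < e ->
  (forall t, 0 < t <= e -> `|L| <= t * C) -> L = 0.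
Proof.
move=> e0 small; apply/normr0_eq0/eqP; rewrite eq_le normr_ge0 andbT.
apply/ler_addgt0Pr => d d0; rewrite add0r.
have C1 : 0 < `|C| + 1 by rewrite ltr_wpDl.
pose t := Num.min e (d / (`|C| + 1)).
have t0 : 0 < t by rewrite lt_min e0 divr_gt0.
have te : t <= e by rewrite ge_min lexx.
have td : t <= d / (`|C| + 1) by rewrite ge_min lexx orbT.
apply: (le_trans (small t _)); first by rewrite t0 te.
apply: (le_trans (ler_wpM2l (ltW t0) (ler_norm C))).
apply: (le_trans (ler_wpM2r (normr_ge0 C) td)).
by rewrite mulrAC ler_pdivrMr // ler_pM2l // lerDl.
Qed.

End Logarithm.

Section Distributions.
Variables (R : realType) (T : finType).
Implicit Types (p q mu : T -> R) (t : R).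

Lemma xlogyE (x y : R) : xlogy x y = x * ln y.
Proof. by rewrite /xlogy; case: eqP => [->|]; rewrite ?mul0r. Qed.

Lemma sum_xlogyE p q : \sum_a xlogy (p a) (q a) = \sum_a p a * ln (q a).
Proof. by under eq_bigr do rewrite xlogyE. Qed.

Lemma support_subsetP p q :
  (forall a, p a != 0 -> q a != 0) <-> (forall a, q a = 0 -> p a = 0).
Proof.
split=> supp a; last by apply: contraNneq => /supp ->.
by move=> qa0; apply/eqP/negPn/negP => /supp; rewrite qa0 eqxx.
Qed.

Lemma entropyE q : entropy q = - \sum_a q a * ln (q a).
Proof. by rewrite /entropy sum_xlogyE. Qed.

Lemma dist_le1 q a : is_dist q -> q a <= 1.
Proof. by move=> [q0 <-]; rewrite (bigD1 a) //= lerDl sumr_ge0. Qed.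

Lemma entropy_ge0 q : is_dist q -> 0 <= entropy q.
Proof.
move=> Dq; rewrite entropyE oppr_ge0 sumr_le0 // => a _.
by apply: mulr_ge0_le0; [case: Dq | exact/ln_le0/dist_le1].
Qed.

Definition mixture q mu t : T -> R := fun a => q a + t * (mu a - q a).

Lemma sum_mixture q mu t : is_dist q -> is_dist mu -> \sum_a mixture q mu t a = 1.
Proof.
move=> [_ q1] [_ mu1].
by rewrite big_split /= -mulr_sumr sumrB mu1 q1 subrr mulr0 addr0.
Qed.

Lemma mixture_dist q mu t : is_dist q -> is_dist mu -> 0 <= t <= 1 ->
  is_dist (mixture q mu t).
Proof.
move=> Dq Dmu /andP[t0 t1]; split; last exact: sum_mixture.
by move=> a; have := Dq.1 a; have := Dmu.1 a; rewrite /mixture; nra.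
Qed.

Lemma mixture_dist_extrapolate q mu : is_dist q -> is_dist mu ->
  (forall a, q a = 0 -> mu a = 0) ->
  exists2 e, 0 < e & forall s, 0 <= s <= e -> is_dist (mixture q mu (- s)).
Proof.
move=> Dq Dmu supp; have [q0 _] := Dq.
pose e := \prod_(a | q a != 0) q a.
have qa_pos a : q a != 0 -> 0 < q a by rewrite lt_def => ->; exact: q0.
have e_le a : q a != 0 -> e <= q a.
  move=> qa; rewrite /e (bigD1 a) //= ler_piMr ?q0 //.
  by apply: prodr_ile1 => b /andP[_ qb]; rewrite q0 dist_le1.
exists e; first by apply: prodr_gt0 => a; exact: qa_pos.
move=> s /andP[s0 se]; split=> [a|]; last exact: sum_mixture.
have [qa|qa] := eqVneq (q a) 0.
  by rewrite /mixture qa supp // subrr mulr0 addr0.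
have mu_s : s * mu a <= s by rewrite ler_piMr ?dist_le1.
have := e_le a qa; have := Dq.1 a; rewrite /mixture; nra.
Qed.

End Distributions.

Section MaxEntropyAlongLine.
Variables (R : realType) (T : finType) (q mu : T -> R).
Hypotheses (Dq : is_dist q) (Dmu : is_dist mu).

Lemma entropy_mixture_ge_concave a t : q a = 0 -> 0 <= t <= 1 ->
  (1 - t) * entropy q - t * (mu a * ln (t * mu a)) <= entropy (mixture q mu t).
Proof.
move=> qa0 t01; have /andP[t0 _] := t01.
have mixture_a : mixture q mu t a = t * mu a by rewrite /mixture qa0 subr0 add0r.
rewrite !entropyE [\sum_b q b * _](bigD1 a) //=.
rewrite [\sum_b mixture _ _ _ b * _](bigD1 a) //=.
rewrite qa0 mul0r add0r mixture_a.
suff : \sum_(b | b != a) mixture q mu t b * ln (mixture q mu t b)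
         <= (1 - t) * \sum_(b | b != a) q b * ln (q b) by rewrite mulrA; lra.
rewrite mulr_sumr; apply: ler_sum => b _.
have mub : mu b * ln (mu b) <= 0.
  by apply: mulr_ge0_le0; [case: Dmu | exact/ln_le0/dist_le1].
have -> : mixture q mu t b = (1 - t) * q b + t * mu b by rewrite /mixture; ring.
have := convex_xlnx t01 (Dq.1 b) (Dmu.1 b).
have := ler_wpM2l t0 mub; lra.
Qed.

(* Terms with q a = 0 vanish in both sums: there mu a = 0, and x / 0 = 0. *)
Lemma entropy_mixture_ge_quadratic t : (forall a, q a = 0 -> mu a = 0) ->
  is_dist (mixture q mu t) ->
  entropy q - t * \sum_a (mu a - q a) * ln (q a)
    - t ^+ 2 * \sum_a (mu a - q a) ^+ 2 / q a <= entropy (mixture q mu t).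
Proof.
move=> supp [mt0 _]; rewrite !entropyE.
have sum_diff : \sum_a (mu a - q a) = 0 by rewrite sumrB Dmu.2 Dq.2 subrr.
suff : \sum_a mixture q mu t a * ln (mixture q mu t a)
    <= \sum_a (q a * ln (q a) + t * (mu a - q a) + t * ((mu a - q a) * ln (q a))
                + t ^+ 2 * ((mu a - q a) ^+ 2 / q a)).
  by rewrite !big_split /= -!mulr_sumr sum_diff mulr0 addr0; lra.
apply: ler_sum => a _.
have [qa|qa] := eqVneq (q a) 0.
  rewrite /mixture qa (supp a qa) subrr !(mulr0, mul0r, addr0).
  by rewrite expr0n mul0r mulr0 addr0.
have qa_pos : 0 < q a by rewrite lt_def qa Dq.1.
have := xlnx_le_quadratic qa_pos (mt0 a).
have -> : mixture q mu t a - q a = t * (mu a - q a) by rewrite /mixture; ring.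
by rewrite exprMn -mulrA; lra.
Qed.

Hypothesis max_q : forall t, is_dist (mixture q mu t) ->
  entropy (mixture q mu t) <= entropy q.

Lemma maxent_support a : mu a != 0 -> q a != 0.
Proof.
move=> mua; apply/negP => /eqP qa0.
have mua_pos : 0 < mu a by rewrite lt_def mua Dmu.1.
pose H := entropy q.
have bound t : 0 < t <= 1 -> - H <= mu a * ln (t * mu a).
  move=> /andP[t0 t1]; have t01 : 0 <= t <= 1 by rewrite ltW.
  have := max_q (mixture_dist Dq Dmu t01).
  have := entropy_mixture_ge_concave qa0 t01.
  move=> lower upper; have : 0 <= t * (H + mu a * ln (t * mu a)) by lra.
  by rewrite pmulr_rge0 //; lra.
(* For this t, mu a * ln (t * mu a) < - H, contradicting [bound]. *)
pose t := expR (- (H / mu a) - 1).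
have t0 : 0 < t by rewrite expR_gt0.
have H_mua : 0 <= H / mu a by rewrite divr_ge0 ?entropy_ge0 ?ltW.
have t01 : 0 < t <= 1 by rewrite t0 expR_le1; lra.
have := bound t t01.
rewrite lnM ?posrE // expRK mulrDr mulrBr mulrN mulrCA divff ?gt_eqF // mulr1 mulr1.
have : mu a * ln (mu a) <= 0.
  by apply: mulr_ge0_le0; [exact: ltW | exact/ln_le0/dist_le1].
lra.
Qed.

Lemma maxent_cross_entropy : (forall a, q a = 0 -> mu a = 0) ->
  \sum_a mu a * ln (q a) = \sum_a q a * ln (q a).
Proof.
move=> supp; have [e e0 De] := mixture_dist_extrapolate Dq Dmu supp.
set L := \sum_a (mu a - q a) * ln (q a); set C := \sum_a (mu a - q a) ^+ 2 / q a.
have first_order t : is_dist (mixture q mu t) -> 0 <= t * (L + t * C).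
  move=> Dt; have := entropy_mixture_ge_quadratic supp Dt; have := max_q Dt.
  rewrite -/L -/C; lra.
have L_small t : 0 < t <= Num.min 1 e -> `|L| <= t * C.
  rewrite le_min => /and3P[t0 t1 te]; rewrite ler_norml; apply/andP; split.
    have t01 : 0 <= t <= 1 by rewrite ltW.
    have := first_order t (mixture_dist Dq Dmu t01).
    by rewrite pmulr_rge0 //; lra.
  have t0e : 0 <= t <= e by rewrite ltW.
  have := first_order (- t) (De t t0e).
  by rewrite mulNr oppr_ge0 pmulr_rle0 //; lra.
have L0 : L = 0 by apply: (norm_le_small_eq0 _ L_small); rewrite lt_min ltr01.
apply/eqP; rewrite -subr_eq0 -sumrB -[X in _ == X]L0; apply/eqP.
by apply: eq_bigr => a _; rewrite mulrBl.
Qed.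

End MaxEntropyAlongLine.

Section Gibbs.
Variables (R : realType) (T : finType) (p q : T -> R).
Hypotheses (Dp : is_dist p) (Dq : is_dist q) (supp : forall a, q a = 0 -> p a = 0).

Let gap a := p a * (ln (p a) - ln (q a)) - (p a - q a).

Let gap_ge0 a : 0 <= gap a.
Proof.
have [qa|qa] := eqVneq (q a) 0; first by rewrite /gap qa supp // mul0r subrr subr0.
by rewrite subr_ge0; apply: ler_sub_mul_lnB; rewrite ?lt_def ?qa ?Dq.1 ?Dp.1.
Qed.

Let sum_gap : \sum_a gap a = - \sum_a p a * ln (q a) - entropy p.
Proof.
rewrite entropyE /gap !sumrB Dp.2 Dq.2 subrr subr0 opprK.
by under eq_bigr do rewrite mulrBr; rewrite sumrB addrC.
Qed.

Lemma gibbs_inequality : entropy p <= - \sum_a p a * ln (q a).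
Proof. by rewrite -subr_ge0 -sum_gap; apply: sumr_ge0 => a _; apply: gap_ge0. Qed.

Lemma gibbs_equality : - \sum_a p a * ln (q a) <= entropy p -> p = q.
Proof.
move=> le_pq; have gap0 : \sum_a gap a = 0.
  apply/eqP; rewrite eq_le; apply/andP; split; first by rewrite sum_gap subr_le0.
  by apply: sumr_ge0 => a _; apply: gap_ge0.
have {}gap0 a : gap a = 0 by apply: (psumr_eq0P (fun a _ => gap_ge0 a) gap0).
apply: funext => a; have := gap0 a; rewrite /gap.
have [pa|pa] := eqVneq (p a) 0; first by rewrite pa mul0r !sub0r opprK => ->.
have pa_pos : 0 < p a by rewrite lt_def pa Dp.1.
have qa_pos : 0 < q a by rewrite lt_def Dq.1 andbT; apply: contra pa => /eqP/supp ->.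
have [//|pq] := eqVneq (p a) (q a).
have qp : q a != p a by rewrite eq_sym.
by have := ltr_sub_mul_lnB qa_pos pa_pos qp; lra.
Qed.

End Gibbs.

Section Obedience.
Variables (R : realType) (I : finType) (A : I -> finType).
Local Notation ob := (@obedient R I A).

Lemma upd_in (m : prof A) i (b : A i) : upd m b i = b.
Proof. by rewrite ffunE dfwith_in. Qed.

Lemma upd_out (m : prof A) i (b : A i) j : i != j -> upd m b j = m j.
Proof. by move=> ij; rewrite ffunE dfwith_out. Qed.

Lemma sprob_obedient (a m : prof A) : sprob ob a m = (a == m)%:R.
Proof.
rewrite /sprob; have [->|ne] := eqVneq a m.
  by rewrite big1 // => j _; rewrite /obedient eqxx.
have [j aj] : exists j, a j != m j.
  apply/existsP; rewrite -negb_forall; apply: contra ne => /forallP eq_am.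
  by apply/eqP/ffunP => j; apply/eqP.
by rewrite (bigD1 j) //= /obedient (negbTE aj) mul0r.
Qed.

Lemma sum_obedient (eta : prof A -> R) a : \sum_m eta m * sprob ob a m = eta a.
Proof.
rewrite (bigD1 a) //= sprob_obedient eqxx mulr1 big1 ?addr0 // => m ma.
by rewrite sprob_obedient eq_sym (negbTE ma) mulr0.
Qed.

Lemma EU_obedient (u : I -> prof A -> R) i m : EU u ob i m = u i m.
Proof.
rewrite /EU (bigD1 m) //= sprob_obedient eqxx mul1r big1 ?addr0 // => a am.
by rewrite sprob_obedient (negbTE am) mul0r.
Qed.

Lemma EUdev_obedient (u : I -> prof A -> R) i (b : A i) m :
  EUdev u ob b m = u i (upd m b).
Proof.
have prod_upd (a : prof A) : a i == b ->
    \prod_(j | j != i) obedient R (m j) (a j) = (a == upd m b)%:R.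
  move=> /eqP ai; rewrite -sprob_obedient /sprob [RHS](bigD1 i) // upd_in ai.
  rewrite [in RHS]/obedient eqxx /= mul1r.
  by apply: eq_bigr => j ji; rewrite upd_out // eq_sym.
rewrite /EUdev (bigD1 (upd m b)) /=; last by rewrite upd_in.
rewrite prod_upd ?upd_in // eqxx mul1r big1 ?addr0 // => a /andP[ai ne].
by rewrite prod_upd // (negbTE ne) mul0r.
Qed.

Lemma obedient_CE (u : I -> prof A -> R) (q : prof A -> R) :
  (forall i (mi : A i), 0 < \sum_(m : prof A | m i == mi) q m ->
     forall ai' : A i, 0 <= \sum_(m : prof A | m i == mi)
                              q m * (EU u ob i m - EUdev u ob ai' m)) <->
  (forall i (ai : A i), 0 < \sum_(a : prof A | a i == ai) q a ->
     forall b : A i, 0 <= \sum_(a : prof A | a i == ai)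
                            q a * (u i a - u i (upd a b))).
Proof.
split=> obey i ai q_ai b.
  by have := obey i ai q_ai b; under eq_bigr do rewrite EU_obedient EUdev_obedient.
by under eq_bigr do rewrite EU_obedient EUdev_obedient; apply: obey.
Qed.

End Obedience.

Section Beliefs.
Variables (R : realType) (I : finType) (M : I -> finType).
Implicit Types (eta q : prof M -> R) (F : (prof M -> R) -> Prop).

Lemma DeltaD_mixture eta F q t : DeltaD eta F q ->
  is_dist (mixture q eta t) -> DeltaD eta F (mixture q eta t).
Proof.
move=> [_ Fq] Dt; split=> // f Ff.
under eq_bigr do rewrite /mixture mulrDl -mulrA mulrBl.
by rewrite big_split /= -mulr_sumr sumrB Fq // subrr mulr0 addr0.
Qed.

(* For eta supported in supp q, these constraints cut Delta_D down to the
   distributions supported in supp q with the same cross-entropy against q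
   as eta. *)
Definition log_belief_constraints q (f : prof M -> R) : Prop :=
  f = (fun m => ln (q m)) \/ f = (fun m => (q m == 0)%:R).

Lemma DeltaD_log_belief_constraints eta q q' : (forall m, q m = 0 -> eta m = 0) ->
  DeltaD eta (log_belief_constraints q) q' ->
  (forall m, q m = 0 -> q' m = 0) /\
  \sum_m q' m * ln (q m) = \sum_m eta m * ln (q m).
Proof.
move=> supp [[q'0 _] constr]; split; last exact: constr (or_introl erefl).
have := constr _ (or_intror erefl).
rewrite [RHS]big1 => [zero_mass m qm0|m _]; last first.
  by have [/supp->|_] := eqVneq (q m) 0; rewrite ?mul0r ?mulr0.
have nonneg m' : true -> 0 <= q' m' * (q m' == 0)%:R by rewrite mulr_ge0.
by have := psumr_eq0P nonneg zero_mass (i:=m) isT; rewrite qm0 eqxx mulr1.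
Qed.

Lemma maxent_belief_log_constraints eta q : is_dist q ->
  (forall m, q m = 0 -> eta m = 0) ->
  \sum_m eta m * ln (q m) = \sum_m q m * ln (q m) ->
  maxent_belief eta (log_belief_constraints q) q.
Proof.
move=> Dq supp cross_entropy_eq.
have Delta_q : DeltaD eta (log_belief_constraints q) q.
  split=> // f [->|->]; first by rewrite cross_entropy_eq.
  by rewrite !big1 // => m _; have [qm|_] := eqVneq (q m) 0;
    rewrite ?mulr0 // ?supp // ?qm mul0r.
have entropy_eq : entropy q = - \sum_m eta m * ln (q m).
  by rewrite entropyE cross_entropy_eq.
split=> //; split=> [q' Dq'|q' Dq' max_q'];
  have [supp' cross_entropy_eq'] := DeltaD_log_belief_constraints supp Dq'.
- by rewrite entropy_eq -cross_entropy_eq'; apply: gibbs_inequality => //; case: Dq'.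
- apply: gibbs_equality => //; first by case: Dq'.
  by rewrite cross_entropy_eq' -entropy_eq; apply: max_q'.
Qed.

End Beliefs.

Theorem proposition2 (R : realType) (I : finType) (A : I -> finType)
  (u : I -> prof A -> R) (mu : prof A -> R) :
  is_dist mu ->
  (directly_implementable u mu <-> exists q : prof A -> R, CE u q /\ Iq q mu).
Proof.
move=> Dmu; split.
- move=> [eta [F [q [_ [[Delta_q [max_q _]] [obey mu_eta]]]]]].
  have eta_mu : eta = mu by apply: funext => a; rewrite mu_eta sum_obedient.
  subst eta; have Dq := Delta_q.1.
  have max_line t :
      is_dist (mixture q mu t) -> entropy (mixture q mu t) <= entropy q.
    by move=> Dt; apply/max_q/DeltaD_mixture.
  have supp := maxent_support Dq Dmu max_line.
  exists q; split; first by split=> //; apply/obedient_CE.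
  split=> //; split=> //; rewrite !sum_xlogyE.
  by apply: maxent_cross_entropy => //; apply/support_subsetP.
- move=> [q [[Dq obey] [_ [supp cross_entropy_eq]]]].
  exists mu, (log_belief_constraints q), q; split=> //; split.
    apply: maxent_belief_log_constraints => //; first exact/support_subsetP.
    by rewrite -!sum_xlogyE.
  by split=> [|a]; [apply/obedient_CE | rewrite sum_obedient].
Qed.
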